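(* Let $K_f, M, B, P_m, P_f, k_{22}>0$, $b_{22}>0$, $I_m, I_f\ge 0$, $B_f\ge 0$ and $0\le\alpha\le 1$ be real numbers, and put $\mu=I_m/P_m$, $\nu=I_f/P_f$. Consider the two-port with hybrid matrix $H(s)=\begin{bmatrix} h_{11}&h_{12}\\ h_{21}&h_{22}\end{bmatrix}$ where $$h_{11}(s)=\frac{B_fMs^4+\big(B_f(B+P_m)+K_fM\big)s^3+\big(B_fI_m+K_f(B+P_m)\big)s^2+K_fI_ms}{a_4s^4+a_3s^3+a_2s^2+a_1s+a_0},$$ $$h_{12}(s)=\frac{B_fP_mP_fs^3+P_mP_f\big(K_f+B_f(\mu+\nu)\big)s^2+\big(B_fI_mI_f+K_fP_mP_f(\mu+\nu)\big)s+K_fI_mI_f}{a_4s^4+a_3s^3+a_2s^2+a_1s+a_0},$$ $h_{21}(s)=-1$, $h_{22}(s)=\dfrac{s}{b_{22}s+k_{22}}$, with $a_4=M$, $a_3=B+P_m+B_f(\alpha+P_mP_f)$, $a_2=I_m+K_f(\alpha+P_mP_f)+B_fP_mP_f(\mu+\nu)$, $a_1=B_fI_mI_f+K_fP_mP_f(\mu+\nu)$, $a_0=K_fI_mI_f$. Suppose that: the $h$-parameters have no poles in the open right half plane; any poles of the $h$-parameters on the imaginary axis are simple with real positive residues; and $\mathrm{Re}\,h_{11}(j\omega)\ge 0$ for all real $\omega$. If this two-port is absolutely stable, then $B_f>0$.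
   Context: This models a series (damped) elastic actuator (actuator inertia $M$, actuator damping $B$, physical spring $K_f$ in parallel with physical damper $B_f$; $B_f=0$ is a pure series elastic actuator) under velocity-sourced impedance control with PI motion controller gains $P_m,I_m$, PI force controller gains $P_f,I_f$, feed-forward parameter $\alpha$, and a virtual coupler consisting of a spring $k_{22}$ in parallel with a damper $b_{22}$. The hybrid matrix relates $(F_{\mathrm{int}},v_e)^T=H\,(-v_h,F_e)^T$. A two-port with hybrid matrix $H$ is called absolutely stable if (Llewellyn's criterion): (a) the $h$-parameters have no poles in the open right half plane; (b) any poles of the $h$-parameters on the imaginary axis are simple with real positive residues; (c) for all real $\omega$ (away from imaginary-axis poles), (i) $\mathrm{Re}\,h_{11}(j\omega)\ge 0$ and (ii) $2\,\mathrm{Re}\,h_{11}(j\omega)\,\mathrm{Re}\,h_{22}(j\omega)-\mathrm{Re}\big(h_{12}(j\omega)h_{21}(j\omega)\big)-\big|h_{12}(j\omega)h_{21}(j\omega)\big|\ge 0$. *)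

From mathcomp Require Import all_boot all_order all_algebra.
From mathcomp Require Import complex.
From mathcomp Require Import reals.
From Stdlib Require Lists.List.
Set Implicit Arguments. Unset Strict Implicit. Unset Printing Implicit Defensive.
Import Order.TTheory GRing.Theory Num.Theory.
Local Open Scope ring_scope.

Section RatFun.
Variable R : realType.
Local Notation C := R[i].

Record ratfun := RatFun { rnum : {poly C}; rden : {poly C} }.

Definition linf (z : C) : {poly C} := 'X - z%:P.

(* z is a pole of f: after cancelling common factors (X - z), the
   denominator still vanishes at z, i.e. mult_z(den) > mult_z(num). *)
Definition rf_pole (f : ratfun) (z : C) : Prop :=
  rnum f != 0 /\ (mup z (rnum f) < mup z (rden f))%N.

Definition rf_simple_pole (f : ratfun) (z : C) : Prop :=
  rnum f != 0 /\ mup z (rden f) = (mup z (rnum f)).+1.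

(* Residue at a simple pole z:  f = (X-z)^m p1 / ((X-z)^(m+1) q1), res = p1(z)/q1(z). *)
Definition rf_res (f : ratfun) (z : C) : C :=
  (rnum f %/ linf z ^+ mup z (rnum f)).[z] / (rden f %/ linf z ^+ mup z (rden f)).[z].

(* Value at a non-pole z (continuous extension, removing removable singularities). *)
Definition rf_eval (f : ratfun) (z : C) : C :=
  (rnum f %/ linf z ^+ mup z (rden f)).[z] / (rden f %/ linf z ^+ mup z (rden f)).[z].

Definition jw (w : R) : C := Complex 0 w.

(* Llewellyn's absolute stability for a two-port with h-parameters h11 h12 h21 h22. *)
Definition hcond_a (h : seq ratfun) : Prop :=
  forall f, Stdlib.Lists.List.In f h -> forall z : C, 0 < 'Re z -> ~ rf_pole f z.

Definition hcond_b (h : seq ratfun) : Prop :=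
  forall f, Stdlib.Lists.List.In f h -> forall w : R, rf_pole f (jw w) ->
    rf_simple_pole f (jw w) /\ rf_res f (jw w) \is Num.real /\ 0 < rf_res f (jw w).

Definition away_from_poles (h : seq ratfun) (w : R) : Prop :=
  forall f, Stdlib.Lists.List.In f h -> ~ rf_pole f (jw w).

Definition hcond_ci (h11 : ratfun) (h : seq ratfun) : Prop :=
  forall w : R, away_from_poles h w -> 0 <= 'Re (rf_eval h11 (jw w)).

Definition hcond_cii (h11 h12 h21 h22 : ratfun) : Prop :=
  forall w : R, away_from_poles [:: h11; h12; h21; h22] w ->
    let p := rf_eval h12 (jw w) * rf_eval h21 (jw w) in
    0 <= 2 * 'Re (rf_eval h11 (jw w)) * 'Re (rf_eval h22 (jw w)) - 'Re p - `|p|.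

Definition absolutely_stable (h11 h12 h21 h22 : ratfun) : Prop :=
  let h := [:: h11; h12; h21; h22] in
  [/\ hcond_a h, hcond_b h, hcond_ci h11 h & hcond_cii h11 h12 h21 h22].

Definition cst (x : R) : {poly C} := (Complex x 0)%:P.

Definition sea_den (Kf M B Pm Pf Im If Bf alpha : R) : {poly C} :=
  let mu := Im / Pm in let nu := If / Pf in
  cst M * 'X^4
  + cst (B + Pm + Bf * (alpha + Pm * Pf)) * 'X^3
  + cst (Im + Kf * (alpha + Pm * Pf) + Bf * Pm * Pf * (mu + nu)) * 'X^2
  + cst (Bf * Im * If + Kf * Pm * Pf * (mu + nu)) * 'X
  + cst (Kf * Im * If).

Definition sea_h11 (Kf M B Pm Pf Im If Bf alpha : R) : ratfun :=
  RatFun (cst (Bf * M) * 'X^4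
          + cst (Bf * (B + Pm) + Kf * M) * 'X^3
          + cst (Bf * Im + Kf * (B + Pm)) * 'X^2
          + cst (Kf * Im) * 'X)
         (sea_den Kf M B Pm Pf Im If Bf alpha).

Definition sea_h12 (Kf M B Pm Pf Im If Bf alpha : R) : ratfun :=
  let mu := Im / Pm in let nu := If / Pf in
  RatFun (cst (Bf * Pm * Pf) * 'X^3
          + cst (Pm * Pf * (Kf + Bf * (mu + nu))) * 'X^2
          + cst (Bf * Im * If + Kf * Pm * Pf * (mu + nu)) * 'X
          + cst (Kf * Im * If))
         (sea_den Kf M B Pm Pf Im If Bf alpha).

Definition sea_h21 : ratfun := RatFun (cst (-1)) 1.

Definition sea_h22 (k22 b22 : R) : ratfun :=
  RatFun 'X (cst b22 * 'X + cst k22).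

End RatFun.

(* Put B_f = 0.  On the imaginary axis, Re h11(jw) |D(jw)|^2 is then a polynomial
   of degree only 4 in w (its w^6 terms cancel), while Re h12(jw) |D(jw)|^2 has
   leading term -P_m P_f K_f M w^6, and 0 <= Re h22(jw) <= 1/b22.  As h21 = -1 and
   Re p <= |p|, Llewellyn's condition (ii) implies Re h11 Re h22 + Re h12 >= 0
   wherever no h-parameter has a pole, and this fails for large w. *)

From mathcomp Require Import all_boot all_order all_algebra.
From mathcomp Require Import complex reals.
From mathcomp Require Import ring lra.
Set Implicit Arguments.
Unset Strict Implicit.
Unset Printing Implicit Defensive.

Import Order.TTheory GRing.Theory Num.Theory.
Local Open Scope ring_scope.

Lemma Llewellyn_ii_N1_ge0 (C : numClosedFieldType) (x y z : C) :
  0 <= 2 * x * y - 'Re (z * -1) - `|z * -1| -> 0 <= x * y + 'Re z.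
Proof.
set p := z * -1; move=> h; have Rep := (leif_Re_Creal p).1.
have : 0 <= 2 * (x * y - 'Re p).
  have -> : 2 * (x * y - 'Re p) = 2 * x * y - 'Re p - 'Re p by ring.
  exact: le_trans h (lerB (lexx _) Rep).
by rewrite pmulr_rge0 ?ltr0n // /p mulrN1 raddfN opprK.
Qed.

Lemma norm_quadratic_le (R : realDomainType) (x2 x1 x0 T : R) : 1 <= T ->
  `|x2 * T ^+ 2 + x1 * T + x0| <= (`|x2| + `|x1| + `|x0|) * T ^+ 2.
Proof.
move=> T1; have T0 : 0 <= T by lra.
have TT2 : T <= T ^+ 2 by rewrite expr2 ler_peMl.
rewrite !mulrDl (le_trans (ler_normD _ _)) // lerD //.
  rewrite (le_trans (ler_normD _ _)) // !normrM (ger0_norm T0) -expr2.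
  by rewrite lerD // ler_wpM2l.
by rewrite ler_peMr // (le_trans T1).
Qed.

Lemma cubic_eventually_neg (R : realFieldType) (a c e2 e1 e0 f2 f1 : R) :
  0 < a -> 0 <= c ->
  exists2 T, 0 < T & forall Q, 0 <= Q <= c ->
    (f2 * T ^+ 2 + f1 * T) * Q - a * T ^+ 3 + e2 * T ^+ 2 + e1 * T + e0 < 0.
Proof.
move=> a0 c0; set K := (`|f2| + `|f1|) * c + (`|e2| + `|e1| + `|e0|).
have K0 : 0 <= K by rewrite addr_ge0 ?mulr_ge0 ?addr_ge0.
have Ka0 : 0 <= K / a := divr_ge0 K0 (ltW a0).
exists (1 + K / a); first lra.
move=> Q /andP[Q0 Qc].
set T := 1 + K / a.
have T1 : 1 <= T by rewrite /T; lra.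
have aT : a * T = a + K by rewrite mulrDr mulr1 mulrCA divff ?mulr1 ?gt_eqF.
have fQ : (f2 * T ^+ 2 + f1 * T) * Q <= (`|f2| + `|f1|) * T ^+ 2 * c.
  have := norm_quadratic_le f2 f1 0 T1; rewrite normr0 !addr0 => fT.
  apply: le_trans (ler_wpM2r Q0 (ler_norm _)) _.
  apply: le_trans (ler_wpM2l (normr_ge0 _) Qc) _.
  by rewrite ler_wpM2r.
have eT := le_trans (ler_norm _) (norm_quadratic_le e2 e1 e0 T1).
have -> : a * T ^+ 3 = (a + K) * T ^+ 2 by rewrite -aT; ring.
have : 0 < a * T ^+ 2 by rewrite mulr_gt0 // exprn_gt0 // (lt_le_trans ltr01).
rewrite /K in fQ eT *; lra.
Qed.

Section ComplexParts.
Local Open Scope complex_scope.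
Variable R : rcfType.
Implicit Types a b c d : R.

Lemma ReC a b : 'Re (a +i* b) = a%:C.
Proof. by rewrite [a +i* b]complexE Re_rect // complex_real. Qed.

Lemma ImC a b : 'Im (a +i* b) = b%:C.
Proof. by rewrite [a +i* b]complexE Im_rect // complex_real. Qed.

Lemma Re_divC a b c d :
  'Re ((a +i* b) / (c +i* d)) = ((a * c + b * d) / (c ^+ 2 + d ^+ 2))%:C.
Proof.
rewrite Re_div !ReC !ImC -[`|_| ^+ 2]add_Re2_Im2 /=.
by rewrite -!rmorphM -rmorphD -fmorph_div.
Qed.

End ComplexParts.

Section RatFunEval.
Local Open Scope complex_scope.
Variable R : realType.
Implicit Types (f : ratfun R) (z : R[i]).

Lemma rf_eval_nonroot f z :
  (rden f).[z] != 0 -> rf_eval f z = (rnum f).[z] / (rden f).[z].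
Proof. by move=> Dz; rewrite /rf_eval mupNroot ?expr0 ?divp1. Qed.

Lemma nonroot_not_rf_pole f z : (rden f).[z] != 0 -> ~ rf_pole f z.
Proof. by move=> Dz [_]; rewrite (mupNroot Dz). Qed.

Lemma Re_rf_eval f z a b c d :
  (rnum f).[z] = a +i* b -> (rden f).[z] = c +i* d -> c +i* d != 0 ->
  'Re (rf_eval f z) = ((a * c + b * d) / (c ^+ 2 + d ^+ 2))%:C.
Proof.
move=> Nz Dz D0; have Dz0 : (rden f).[z] != 0 by rewrite Dz.
by rewrite rf_eval_nonroot // Nz Dz Re_divC.
Qed.

End RatFunEval.

Section PureSEA.
Local Open Scope complex_scope.
Variable R : realType.
Variables Kf M B Pm Pf Im If alpha k22 b22 : R.
Hypotheses (Kf_gt0 : 0 < Kf) (M_gt0 : 0 < M) (Pm_gt0 : 0 < Pm) (Pf_gt0 : 0 < Pf).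
Hypothesis b22_gt0 : 0 < b22.

Local Notation h11 := (sea_h11 Kf M B Pm Pf Im If 0 alpha).
Local Notation h12 := (sea_h12 Kf M B Pm Pf Im If 0 alpha).
Local Notation h21 := (sea_h21 R).
Local Notation h22 := (sea_h22 k22 b22).

Let a0 := Kf * Im * If.
Let a1 := Kf * Pm * Pf * (Im / Pm + If / Pf).
Let a2 := Im + Kf * (alpha + Pm * Pf).
Let bP := B + Pm.
Let q := Pm * Pf * Kf.

Let den_re w := M * w ^+ 4 - a2 * w ^+ 2 + a0.
Let den_im w := a1 * w - bP * w ^+ 3.

(* [re11 w] and [re12 w] are Re h11(jw) and Re h12(jw) times
   |D(jw)|^2 = den_re w ^+ 2 + den_im w ^+ 2; [re22 w] is Re h22(jw). *)
Let re11 w :=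
  - (Kf * bP) * w ^+ 2 * den_re w + (Kf * Im * w - Kf * M * w ^+ 3) * den_im w.
Let re12 w := (a0 - q * w ^+ 2) * den_re w + a1 * w * den_im w.
Let re22 w := w * (b22 * w) / (k22 ^+ 2 + (b22 * w) ^+ 2).

Let f2 := Kf * (bP * a2 - Im * bP - M * a1).
Let f1 := Kf * (Im * a1 - bP * a0).
Let e2 := a0 * M + q * a2 - a1 * bP.
Let e1 := a1 ^+ 2 - a0 * a2 - q * a0.
Let e0 := a0 ^+ 2.

Lemma pure_sea_den_jw w :
  (sea_den Kf M B Pm Pf Im If 0 alpha).[jw w] = den_re w +i* den_im w.
Proof.
rewrite /sea_den /cst /jw !hornerD !hornerCM hornerX !hornerXn hornerC.
rewrite !exprS expr0; simpc.
by congr Complex; rewrite /den_re /den_im /a0 /a1 /a2 /bP; ring.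
Qed.

Lemma pure_sea_h11_num_jw w :
  (rnum h11).[jw w] = (- (Kf * bP) * w ^+ 2) +i* (Kf * Im * w - Kf * M * w ^+ 3).
Proof.
rewrite /= /cst /jw !hornerD !hornerCM hornerX !hornerXn.
by rewrite !exprS expr0; simpc; congr Complex; rewrite /bP; ring.
Qed.

Lemma pure_sea_h12_num_jw w : (rnum h12).[jw w] = (a0 - q * w ^+ 2) +i* (a1 * w).
Proof.
rewrite /= /cst /jw !hornerD !hornerCM hornerX !hornerXn hornerC.
by rewrite !exprS expr0; simpc; congr Complex; rewrite /a0 /a1 /q; ring.
Qed.

Lemma sea_h22_num_jw w : (rnum h22).[jw w] = 0 +i* w.
Proof. exact: hornerX. Qed.

Lemma sea_h22_den_jw w : (rden h22).[jw w] = k22 +i* (b22 * w).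
Proof. by rewrite /= /cst /jw !hornerD !hornerCM hornerX hornerC; simpc. Qed.

Lemma sea_h22_den_jw_neq0 w : w != 0 -> (rden h22).[jw w] != 0.
Proof.
move=> w0; rewrite sea_h22_den_jw; apply: contraNneq w0 => /eqP.
by rewrite eq_complex /= mulf_eq0 (gt_eqF b22_gt0) => /andP[_].
Qed.

Lemma sea_h21_eval z : rf_eval h21 z = -1.
Proof.
by rewrite rf_eval_nonroot /= /cst !hornerE ?oner_neq0 // divr1 complexr0 rmorphN1.
Qed.

Lemma pure_sea_Re_h11h22_h12_jw w : w != 0 -> den_re w +i* den_im w != 0 ->
  'Re (rf_eval h11 (jw w)) * 'Re (rf_eval h22 (jw w)) + 'Re (rf_eval h12 (jw w))
  = ((re11 w * re22 w + re12 w) / (den_re w ^+ 2 + den_im w ^+ 2))%:C.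
Proof.
move=> w0 D0; have D22 := sea_h22_den_jw_neq0 w0; rewrite sea_h22_den_jw in D22.
rewrite (Re_rf_eval (pure_sea_h11_num_jw w) (pure_sea_den_jw w) D0).
rewrite (Re_rf_eval (pure_sea_h12_num_jw w) (pure_sea_den_jw w) D0).
rewrite (Re_rf_eval (sea_h22_num_jw w) (sea_h22_den_jw w) D22).
by rewrite -rmorphM -rmorphD mul0r add0r mulrAC -mulrDl.
Qed.

Lemma sea_re22_bounds w : w != 0 -> 0 <= re22 w <= b22^-1.
Proof.
move=> w0; set u := (b22 * w) ^+ 2; set D := k22 ^+ 2 + u.
have u0 : 0 < u by rewrite exprn_even_gt0 //= mulf_neq0 // gt_eqF.
have uD : u <= D by rewrite lerDr sqr_ge0.
have D0 : 0 < D := lt_le_trans u0 uD.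
have -> : re22 w = b22^-1 * (u / D).
  by rewrite /re22 -/u -/D /u; field; rewrite !gt_eqF.
have uD1 : u / D <= 1 by rewrite ler_pdivrMr // mul1r.
have b22V0 : 0 < b22^-1 by rewrite invr_gt0.
rewrite pmulr_rge0 // divr_ge0 ?(ltW u0) ?(ltW D0) //=.
by rewrite ler_piMr // ltW.
Qed.

Lemma pure_sea_re_num_cubic w Q : re11 w * Q + re12 w =
  (f2 * (w ^+ 2) ^+ 2 + f1 * w ^+ 2) * Q - q * M * (w ^+ 2) ^+ 3
    + e2 * (w ^+ 2) ^+ 2 + e1 * w ^+ 2 + e0.
Proof.
by rewrite /re11 /re12 /den_re /den_im /f2 /f1 /e2 /e1 /e0; ring.
Qed.

Lemma pure_sea_not_Llewellyn_ii : ~ hcond_cii h11 h12 h21 h22.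
Proof.
move=> cii; have qM0 : 0 < q * M by rewrite /q !mulr_gt0.
have c0 : 0 <= b22^-1 by rewrite invr_ge0 ltW.
have [T T0 negT] := cubic_eventually_neg e2 e1 e0 f2 f1 qM0 c0.
set w := Num.sqrt T; have wT : w ^+ 2 = T by rewrite sqr_sqrtr ?ltW.
have w0 : w != 0 by rewrite sqrtr_eq0 -ltNge.
have neg : re11 w * re22 w + re12 w < 0.
  by rewrite pure_sea_re_num_cubic wT negT // sea_re22_bounds.
(* A zero of D(jw) would make re11 w and re12 w vanish, contradicting [neg]. *)
have N0 : 0 < den_re w ^+ 2 + den_im w ^+ 2.
  rewrite lt_neqAle addr_ge0 ?sqr_ge0 // andbT eq_sym paddr_eq0 ?sqr_ge0 // !sqrf_eq0.
  apply: contraTN neg => /andP[/eqP Dr /eqP Di].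
  by rewrite /re11 /re12 Dr Di !mulr0 !addr0 mul0r ltxx.
have D0 : den_re w +i* den_im w != 0.
  apply: contraTneq N0 => /eqP; rewrite eq_complex /= => /andP[/eqP -> /eqP ->].
  by rewrite expr0n addr0 ltxx.
have away : away_from_poles [:: h11; h12; h21; h22] w.
  move=> f /= [<-|[<-|[<-|[<-|[]]]]]; apply: nonroot_not_rf_pole.
  - by rewrite /= pure_sea_den_jw.
  - by rewrite /= pure_sea_den_jw.
  - by rewrite /= hornerC oner_neq0.
  - exact: sea_h22_den_jw_neq0.
have := cii w away; cbv zeta; rewrite sea_h21_eval => /Llewellyn_ii_N1_ge0.
by rewrite pure_sea_Re_h11h22_h12_jw // ler0c pmulr_lge0 ?invr_gt0 // leNgt neg.
Qed.

End PureSEA.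

Theorem lemma7 (R : realType) (Kf M B Pm Pf k22 b22 Im If Bf alpha : R) :
  0 < Kf -> 0 < M -> 0 < B -> 0 < Pm -> 0 < Pf -> 0 < k22 -> 0 < b22 ->
  0 <= Im -> 0 <= If -> 0 <= Bf -> 0 <= alpha -> alpha <= 1 ->
  let h11 := sea_h11 Kf M B Pm Pf Im If Bf alpha in
  let h12 := sea_h12 Kf M B Pm Pf Im If Bf alpha in
  let h21 := sea_h21 R in
  let h22 := sea_h22 k22 b22 in
  hcond_a [:: h11; h12; h21; h22] ->
  hcond_b [:: h11; h12; h21; h22] ->
  hcond_ci h11 [:: h11; h12; h21; h22] ->
  absolutely_stable h11 h12 h21 h22 ->
  0 < Bf.
Proof.
move=> Kf0 M0 _ Pm0 Pf0 _ b0 _ _ Bf0 _ _ h11 h12 h21 h22 _ _ _ [_ _ _ cii].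
rewrite lt_def Bf0 andbT; apply: contraPneq cii => Bf_eq0.
rewrite /h11 /h12 Bf_eq0.
exact: pure_sea_not_Llewellyn_ii Kf0 M0 Pm0 Pf0 b0.
Qed.
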